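(* Let $\mathcal M=(G,In,Out,Leak)$ be a strongly connected linear compartmental model with $|In|=|Out|=1$. Let $n$ be the number of compartments and $L$ the length of a shortest directed path in $G$ from the input compartment to the output compartment. In the input-output equation $\det(\partial I-A)y_i=(-1)^{i+j}\det((\partial I-A)^{j,i})u_j$ (with $In=\{j\}$, $Out=\{i\}$), the number of non-constant coefficients on the left-hand side is $n$ if $Leak\ne\emptyset$ and $n-1$ if $Leak=\emptyset$; the number of non-constant coefficients on the right-hand side is $n-1$ if $In=Out$ and $n-L$ if $In\ne Out$.
   Context: A linear compartmental model $\mathcal M=(G,In,Out,Leak)$ consists of a finite directed graph $G=(V_G,E_G)$ without multi-edges, compartments $V_G=\{1,\dots,n\}$, and subsets $In,Out,Leak\subseteq V_G$; edge $k\to \ell$ carries parameter $a_{\ell k}$ and each $\ell\in Leak$ carries $a_{0\ell}$ (independent indeterminates). The compartmental matrix $A$ has $A_{\ell\ell}=-\sum_{k:\,\ell\to k\in E_G}a_{k\ell}$ (minus $a_{0\ell}$ if $\ell\in Leak$), $A_{\ell k}=a_{\ell k}$ if $k\to\ell\in E_G$, $0$ otherwise. $B^{p,q}$ denotes $B$ with row $p$ and column $q$ removed, and $\partial I$ is the diagonal matrix with entries $d/dt$. The equation is viewed as a polynomial in $y_i,u_j$ and their derivatives, whose coefficients are polynomials in the parameters; ''non-constant'' refers to these polynomials. *)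

From HB Require Import structures.
From mathcomp Require Import all_boot all_order all_algebra.
From mathcomp Require Import mpoly.
Set Implicit Arguments. Unset Strict Implicit. Unset Printing Implicit Defensive.
Import GRing.Theory.
Local Open Scope ring_scope.

(* Compartments are 'I_n; the graph G is an edge relation e on 'I_n,
   with (e k l) meaning there is an edge k -> l.  The parameters
   a_{lk} (one for every ordered pair, used only for edges) and a_{0l}
   (leaks) are independent indeterminates of a multivariate polynomial
   ring over the rationals, indexed by the finite type par_t n. *)
Definition par_t (n : nat) := ('I_n * 'I_n + 'I_n)%type.
Definition nvar (n : nat) := #|{: par_t n}|.

(* a_{l k} : parameter of the edge k -> l *)
Definition edge_par n (l k : 'I_n) : {mpoly rat[nvar n]} :=
  'X_(enum_rank (inl (l, k) : par_t n)).
Definition leak_par n (l : 'I_n) : {mpoly rat[nvar n]} :=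
  'X_(enum_rank (inr l : par_t n)).

Definition compartmental_matrix n (e : rel 'I_n) (Leak : {set 'I_n})
  : 'M[{mpoly rat[nvar n]}]_n :=
  \matrix_(l, k)
    if l == k then
      - (\sum_(m | e l m) edge_par m l)
      - (if l \in Leak then leak_par l else 0)
    else if e k l then edge_par l k else 0.

(* det(dI - A), as a polynomial in d = d/dt with coefficients in the
   parameter ring: the characteristic polynomial char_poly A. *)
Definition io_rhs_poly n (A : 'M[{mpoly rat[nvar n]}]_n) (i j : 'I_n)
  : {poly {mpoly rat[nvar n]}} :=
  (-1) ^+ (i + j) * \det (row' j (col' i (char_poly_mx A))).

Definition nonconst k (p : {mpoly rat[k]}) : bool := p != (p@_0)%:MP_[k].

Definition count_nonconst k (P : {poly {mpoly rat[k]}}) : nat :=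
  count (fun m => nonconst P`_m) (iota 0 (size P)).

Definition strongly_connected n (e : rel 'I_n) : Prop :=
  forall x y : 'I_n, connect e x y.

Definition shortest_path_length n (e : rel 'I_n) (x y : 'I_n) (L : nat) : Prop :=
  (exists p : seq 'I_n, [/\ size p = L, path e x p & last x p = y]) /\
  (forall p : seq 'I_n, path e x p -> last x p = y -> (L <= size p)%N).

From HB Require Import structures.
From mathcomp Require Import all_boot all_order all_algebra.
From mathcomp Require Import mpoly.
From mathcomp Require Import fingroup perm zify.
Set Implicit Arguments. Unset Strict Implicit. Unset Printing Implicit Defensive.
Import GRing.Theory Num.Theory.
Local Open Scope ring_scope.

(* A coefficient is non-constant as soon as it takes two different values.
   At the zero point A = 0, so det(XI - A) = X^n and adj(XI - A) = X^(n-1) I: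
   every coefficient below the top degree vanishes there.  At the point giving
   rate 1 to the edges of a shortest-path in-tree of G rooted at r (and leak c
   at r, all other parameters 0), XI - A is triangular along the tree heights h,
   det(XI - A) = (X + c) (X + 1)^(n-1) and row r of adj(XI - A) is
   (X + 1)^(n-1-h(k)), whose coefficients are nonzero binomials.  The remaining
   coefficients are constant: the top ones because the polynomials are monic,
   det(-A) without leaks because the columns of A then sum to zero, and the
   coefficients of degree >= n - L of adj(XI - A)_(i,j), because by
   (XI - A) adj(XI - A) = det(XI - A) I the degree-d coefficient of
   adj(XI - A)_(l,j) vanishes unless G has a walk from j to l of length at
   most n - 1 - d. *)

Lemma det_height_trig (R : comNzRingType) n (M : 'M[R]_n) (h : 'I_n -> nat) :
  (forall l k, l != k -> M l k != 0 -> (h l < h k)%N) -> \det M = \prod_i M i i.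
Proof.
move=> M_graded; rewrite /determinant (bigD1 (1%g : 'S_n)) //= [X in _ + X]big1 ?addr0.
  by rewrite odd_perm1 mul1r; apply: eq_bigr => i _; rewrite perm1.
move=> s s_neq1.
have [i0 moved_i0] : exists i, s i != i.
  apply/existsP; apply: contraR s_neq1 => /existsPn s_fix; apply/eqP/permP => x.
  by rewrite perm1; apply/eqP; move: (s_fix x); rewrite negbK.
(* At a moved point of maximal height, [M i (s i) != 0] would make [s i] a higher moved point. *)
have [i moved_i max_i] := @arg_maxnP _ i0 (fun i => s i != i) h moved_i0.
rewrite (bigD1 i) //=.
suff -> : M i (s i) = 0 by rewrite mul0r mulr0.
apply/eqP; apply: contraT => M_is_nz.
have lt_h : (h i < h (s i))%N by apply: M_graded => //; rewrite eq_sym.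
have moved_si : s (s i) != s i by rewrite (inj_eq perm_inj).
by have := leq_trans lt_h (max_i _ moved_si); rewrite ltnn.
Qed.

Lemma det_eq0_colsum (R : comNzRingType) n (A : 'M[R]_n) :
  (0 < n)%N -> (forall k, \sum_l A l k = 0) -> \det A = 0.
Proof.
move=> n_gt0 colsum0; pose u : 'rV[R]_n := const_mx 1.
have uA : u *m A = 0.
  by apply/rowP => k; rewrite !mxE -[RHS](colsum0 k); apply: eq_bigr => l _; rewrite mxE mul1r.
have := congr1 (mulmx u) (mul_mx_adj A).
rewrite mulmxA uA mul0mx mul_mx_scalar => /rowP /(_ (Ordinal n_gt0)).
by rewrite !mxE mulr1 => ->.
Qed.

Lemma char_poly_mxE (R : comNzRingType) n (A : 'M[R]_n) l k :
  char_poly_mx A l k = 'X *+ (l == k) - (A l k)%:P.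
Proof. by rewrite !mxE. Qed.

Lemma char_poly0 (R : comNzRingType) n : char_poly (0 : 'M[R]_n) = 'X^n.
Proof. by rewrite /char_poly /char_poly_mx map_mx0 subr0 det_scalar. Qed.

Lemma adj_char_poly_mx0 (R : comNzRingType) n :
  \adj (char_poly_mx (0 : 'M[R]_n)) = 'X ^+ n.-1 *: 1%:M.
Proof. by rewrite /char_poly_mx map_mx0 subr0 -[X in \adj X]scalemx1 adjZ adj1. Qed.

Lemma adj_char_poly_mx_diag (R : comNzRingType) n (A : 'M[R]_n) i :
  \adj (char_poly_mx A) i i = char_poly (row' i (col' i A)).
Proof.
rewrite mxE /cofactor -signr_odd oddD addbb expr0 mul1r; congr (\det _).
by apply/matrixP => a b; rewrite !mxE (inj_eq lift_inj).
Qed.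

Lemma coef_adj_char_poly_mx (R : comNzRingType) n (A : 'M[R]_n) (l j : 'I_n) d :
  (\adj (char_poly_mx A) l j)`_d =
  \sum_m A l m * (\adj (char_poly_mx A) m j)`_d.+1
  + (l == j)%:R * (char_poly A)`_d.+1.
Proof.
set B := \adj _.
have := congr1 (fun M : 'M[{poly R}]_n => (M l j)`_d.+1) (mul_mx_adj (char_poly_mx A)).
rewrite -/B /= mxE coef_sum [in RHS]mxE coefMn.
have entry m : (char_poly_mx A l m * B m j)`_d.+1
               = (B l j)`_d *+ (l == m) - A l m * (B m j)`_d.+1.
  rewrite char_poly_mxE mulrBl coefB coefCM; congr (_ - _).
  by case: eqP => [->|_]; rewrite ?mulr1n ?coefXM // mulr0n mul0r coef0.
rewrite (eq_bigr _ (fun m _ => entry m)) sumrB (bigD1 l) //= eqxx mulr1n big1 => [|m].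
  rewrite addr0 /char_poly => /eqP; rewrite subr_eq => /eqP ->.
  by rewrite addrC mulr_natl.
by rewrite eq_sym => /negbTE ->.
Qed.

Lemma coef_adj_char_poly_mx_eq0 (R : comNzRingType) n (e : rel 'I_n) (A : 'M[R]_n) j :
  (forall l m, l != m -> ~~ e m l -> A l m = 0) ->
  forall l d, (forall p, path e j p -> last j p = l -> (n <= d + size p)%N) ->
  (\adj (char_poly_mx A) l j)`_d = 0.
Proof.
move=> A_supp; set B := \adj _.
(* Downward induction on [d], starting above the degree of every entry of column [j]. *)
pose D := (\max_m size (B m j))%N.
suff coef_eq0 k l d : (D <= d + k)%N ->
    (forall p, path e j p -> last j p = l -> (n <= d + size p)%N) -> (B l j)`_d = 0.
  by move=> l d; apply: (coef_eq0 D); rewrite leq_addl.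
elim: k l d => [|k IHk] l d le_D walk_long.
  apply: nth_default; rewrite addn0 in le_D; apply: leq_trans le_D.
  exact: (@leq_bigmax _ (fun m => size (B m j)) l).
rewrite coef_adj_char_poly_mx -/B big1 ?add0r => [|m _].
  have [lj|_] := eqVneq l j; last by rewrite mul0r.
  have := walk_long [::] erefl (esym lj); rewrite addn0 => le_n_d.
  by rewrite nth_default ?mulr0 // size_char_poly.
have [<-|lm] := eqVneq l m.
  rewrite IHk ?mulr0 ?addSnnS // => p pp lp.
  by apply: leq_trans (walk_long p pp lp) _; rewrite leq_add2r.
have [eml|/(A_supp _ _ lm)->] := boolP (e m l); last by rewrite mul0r.
rewrite IHk ?mulr0 ?addSnnS // => p pp lp.
have := walk_long (rcons p l); rewrite rcons_path pp lp eml last_rcons size_rcons.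
by rewrite addnS addSn; apply.
Qed.

Lemma coef_XaddC1_exp (R : nzRingType) m d :
  (('X + 1 : {poly R}) ^+ m)`_d = 'C(m, d)%:R.
Proof.
elim: m d => [|m IHm] d; first by rewrite expr0 coef1 bin0n; case: d.
rewrite exprSr mulrDr mulr1 coefD coefMX !IHm; case: d => [|d] /=.
  by rewrite add0r !bin0.
by rewrite binS natrD addrC.
Qed.

Lemma coef_XaddC1_exp_neq0 (R : numDomainType) m d :
  (d <= m)%N -> (('X + 1 : {poly R}) ^+ m)`_d != 0.
Proof. by move=> le_dm; rewrite coef_XaddC1_exp pnatr_eq0 -lt0n bin_gt0. Qed.


Lemma count_iota_interval a b s :
  count (fun k => a <= k < b)%N (iota 0 s) = (minn s b - minn s a)%N.
Proof.
elim: s => [|s IHs]; first by rewrite !min0n.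
rewrite -addn1 iotaD count_cat IHs /= addn0 add0n.
have [as_|sa] := leqP a s; have [sb|bs] := ltnP s b; lia.
Qed.

Lemma nonconst_meval k (p : {mpoly rat[k]}) u v :
  p.@[u] != p.@[v] -> nonconst p.
Proof. by apply: contraNT => /negPn /eqP ->; rewrite !mevalC. Qed.

Lemma nonconst0 k : nonconst (0 : {mpoly rat[k]}) = false.
Proof. by rewrite /nonconst mcoeff0 mpolyC0 eqxx. Qed.

Lemma nonconst1 k : nonconst (1 : {mpoly rat[k]}) = false.
Proof. by rewrite /nonconst mcoeff1 eqxx mpolyC1 eqxx. Qed.

Lemma monic_coef_nonconst k (P : {poly {mpoly rat[k]}}) d :
  P \is monic -> (size P <= d.+1)%N -> nonconst P`_d = false.
Proof.
move=> /monicP lc_P; rewrite leq_eqVlt => /orP[/eqP size_P | lt_size].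
  by rewrite -[d]/(d.+1.-1) -size_P -lead_coefE lc_P nonconst1.
by rewrite nth_default ?nonconst0.
Qed.


Lemma count_nonconst_interval k (P : {poly {mpoly rat[k]}}) a b :
  (forall d, nonconst P`_d = (a <= d < b)%N) -> count_nonconst P = (b - a)%N.
Proof.
move=> P_nonconst; have le_b_size : (a < b -> b <= size P)%N.
  move=> lt_ab; rewrite leqNgt; apply/negP => lt_size.
  have /leq_sizeP/(_ _ (leqnn _)) P_b : (size P <= b.-1)%N by lia.
  have := P_nonconst b.-1; rewrite P_b nonconst0.
  by have -> : (a <= b.-1 < b)%N by lia.
rewrite /count_nonconst (eq_count P_nonconst) count_iota_interval.
by move: le_b_size; lia.
Qed.

Section TreeMatrix.
Variables (R : idomainType) (n : nat) (r : 'I_n) (par : 'I_n -> 'I_n) (h : 'I_n -> nat).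
Hypothesis h_par : forall k, k != r -> h k = (h (par k)).+1.

Definition tree_mx (c : R) : 'M[R]_n :=
  \matrix_(l, k) if l == k then (if l == r then - c else -1)
                 else ((k != r) && (par k == l))%:R.

Lemma par_neq k : k != r -> par k != k.
Proof. by move=> /h_par h_k; apply/eqP => par_k; rewrite par_k in h_k; lia. Qed.

Lemma char_poly_mx_tree_mx c l k : char_poly_mx (tree_mx c) l k =
  if l == k then 'X + (if k == r then c else 1)%:P
  else - ((k != r) && (par k == l))%:R.
Proof.
rewrite char_poly_mxE mxE; case: eqP => [->|_]; last by rewrite sub0r polyC_natr.
by case: (k == r); rewrite mulr1n ?polyCN opprK.
Qed.

Lemma char_poly_tree_mx c : char_poly (tree_mx c) = ('X + c%:P) * ('X + 1) ^+ n.-1.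
Proof.
rewrite /char_poly (@det_height_trig _ _ _ h) => [|l k /negbTE lk].
  rewrite (bigD1 r) //= char_poly_mx_tree_mx !eqxx; congr (_ * _).
  rewrite (eq_bigr (fun _ => 'X + 1)) => [|k /negbTE kr]; last first.
    by rewrite char_poly_mx_tree_mx eqxx kr.
  by rewrite prodr_const cardC1 card_ord.
rewrite char_poly_mx_tree_mx lk.
by case: andP => [[kr /eqP <-] _|]; rewrite ?(h_par kr) // oppr0 eqxx.
Qed.

Hypothesis h_root : h r = 0%N.

Lemma adj_char_poly_tree_mx c k :
  \adj (char_poly_mx (tree_mx c)) r k * ('X + 1) ^+ h k = ('X + 1) ^+ n.-1.
Proof.
set B := \adj _.
have adj_col k' : \sum_m B r m * char_poly_mx (tree_mx c) m k'
                  = (r == k')%:R * char_poly (tree_mx c).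
  have := congr1 (fun M : 'M_n => M r k') (mul_adj_mx (char_poly_mx (tree_mx c))).
  by rewrite !mxE -/B mulr_natl => ->.
have B_rr : B r r = ('X + 1) ^+ n.-1.
  have := adj_col r; rewrite (bigD1 r) //= big1 ?addr0 => [|m /negbTE mr]; last first.
    by rewrite char_poly_mx_tree_mx mr eqxx andFb oppr0 mulr0.
  rewrite char_poly_mx_tree_mx !eqxx mul1r char_poly_tree_mx [RHS]mulrC.
  by apply: mulIf; rewrite -size_poly_eq0 size_XaddC.
have B_par k' : k' != r -> B r k' * ('X + 1) = B r (par k').
  move=> kr; have := adj_col k'; rewrite eq_sym (negbTE kr) mul0r.
  rewrite (bigD1 k') //= (bigD1 (par k')) /= ?par_neq // big1 ?addr0 => [|m /andP[mk mp]].
    rewrite !char_poly_mx_tree_mx eqxx (negbTE kr) (negbTE (par_neq kr)) eqxx /=.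
    by rewrite mulrN1 => /eqP; rewrite subr_eq0 => /eqP.
  by rewrite char_poly_mx_tree_mx (negbTE mk) kr eq_sym (negbTE mp) oppr0 mulr0.
move E_hk : (h k) => m; elim: m k E_hk => [|m IHm] k E_hk.
  have [->|/h_par] := eqVneq k r; first by rewrite expr0 mulr1.
  by rewrite E_hk.
have kr : k != r by apply: contra_eqN E_hk => /eqP ->; rewrite h_root.
have h_park : h (par k) = m by move: E_hk; rewrite h_par // => -[].
by rewrite exprS mulrA B_par // IHm.
Qed.

Lemma adj_char_poly_tree_mxE c k : (h k <= n.-1)%N ->
  \adj (char_poly_mx (tree_mx c)) r k = ('X + 1) ^+ (n.-1 - h k).
Proof.
move=> le_hk; apply: (mulIf (x := ('X + 1) ^+ h k)).
  by rewrite expf_neq0 // -size_poly_eq0 -polyC1 size_XaddC.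
by rewrite adj_char_poly_tree_mx -exprD subnK.
Qed.

End TreeMatrix.

Section ShortestPathTree.
Variables (n : nat) (e : rel 'I_n) (r : 'I_n).
Hypothesis reach_root : forall x, connect e x r.

Definition has_path_to_root (u : 'I_n) (m : nat) : bool :=
  [exists p : m.-tuple 'I_n, path e u p && (last u p == r)].

Lemma has_path_to_rootP u p :
  path e u p -> last u p = r -> has_path_to_root u (size p).
Proof. by move=> pp lp; apply/existsP; exists (in_tuple p); rewrite pp lp eqxx. Qed.

Lemma ex_path_to_root u : exists m, has_path_to_root u m.
Proof.
have /connectP[p pp lp] := reach_root u.
by exists (size p); apply: has_path_to_rootP.
Qed.

Definition dist_to_root u := ex_minn (ex_path_to_root u).

Lemma dist_to_rootP u : has_path_to_root u (dist_to_root u).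
Proof. by rewrite /dist_to_root; case: ex_minnP. Qed.

Lemma dist_to_root_min u p :
  path e u p -> last u p = r -> (dist_to_root u <= size p)%N.
Proof.
move=> pp lp; rewrite /dist_to_root; case: ex_minnP => m _; apply.
exact: has_path_to_rootP.
Qed.

Lemma dist_to_root_root : dist_to_root r = 0%N.
Proof. by apply/eqP; rewrite -leqn0 (dist_to_root_min (p := [::])). Qed.

Lemma dist_to_root_step u : u != r ->
  exists x, e u x && ((dist_to_root x).+1 == dist_to_root u).
Proof.
move=> ur; have /existsP[[[|x p] /= /eqP size_p]] := dist_to_rootP u.
  by rewrite (negbTE ur).
move=> /andP[/andP[eux pp] /eqP lp]; exists x; rewrite eux /= eqn_leq.
apply/andP; split; first by rewrite -size_p ltnS dist_to_root_min.
have /existsP[q /andP[qq /eqP lq]] := dist_to_rootP x.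
by rewrite -(size_tuple q) (dist_to_root_min (p := x :: q)) //= eux.
Qed.

Definition tree_parent u :=
  odflt u [pick x | e u x && ((dist_to_root x).+1 == dist_to_root u)].

Lemma tree_parentP u : u != r ->
  e u (tree_parent u) /\ dist_to_root u = (dist_to_root (tree_parent u)).+1.
Proof.
move=> ur; rewrite /tree_parent; case: pickP => [x /andP[eux /eqP <-] | none] //.
by have [x] := dist_to_root_step ur; rewrite none.
Qed.

End ShortestPathTree.

Definition tree_point n (r : 'I_n) (par : 'I_n -> 'I_n) (c : rat) : 'I_(nvar n) -> rat :=
  fun x => match enum_val x with
           | inl (l, k) => ((k != r) && (par k == l))%:R
           | inr l => if l == r then c else 0
           end.

Lemma meval_edge_par n (v : 'I_(nvar n) -> rat) l k :
  (edge_par l k).@[v] = v (enum_rank (inl (l, k) : par_t n)).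
Proof. exact: mevalXU. Qed.

Lemma meval_leak_par n (v : 'I_(nvar n) -> rat) l :
  (leak_par l).@[v] = v (enum_rank (inr l : par_t n)).
Proof. exact: mevalXU. Qed.

Lemma map_compartmental_matrix_tree n (e : rel 'I_n) (Leak : {set 'I_n}) r par c :
  (forall k, k != r -> e k (par k)) ->
  map_mx (meval (tree_point r par c)) (compartmental_matrix e Leak) =
  tree_mx r par (if r \in Leak then c else 0).
Proof.
move=> tree_edge; apply/matrixP => l k; rewrite !mxE.
have [_|_] := eqVneq l k; last first.
  rewrite (fun_if (meval _)) meval_edge_par /tree_point enum_rankK meval0.
  case: ifP => // /negbT ekl; case: andP => // -[kr /eqP par_k].
  by rewrite -par_k tree_edge in ekl.
rewrite rmorphB rmorphN /= rmorph_sum /= (fun_if (meval _)) meval_leak_par meval0.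
under eq_bigr => m _ do rewrite meval_edge_par /tree_point enum_rankK.
rewrite /tree_point enum_rankK /=; have [->|lr] := eqVneq l r.
  by rewrite big1 ?oppr0 ?sub0r // => m _; rewrite eqxx.
rewrite if_same subr0 (bigD1 (par l)) ?tree_edge //= eqxx big1 ?addr0 // => m.
by move=> /andP[_ /negbTE]; rewrite eq_sym => ->.
Qed.

Lemma map_compartmental_matrix0 n (e : rel 'I_n) (Leak : {set 'I_n}) :
  map_mx (meval (fun=> 0 : rat)) (compartmental_matrix e Leak) = 0.
Proof.
apply/matrixP => l k; rewrite !mxE; case: ifP => _.
  rewrite rmorphB rmorphN /= rmorph_sum /= big1 => [|m _]; last exact: meval_edge_par.
  by rewrite (fun_if (meval _)) meval_leak_par meval0 if_same oppr0 subr0.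
by rewrite (fun_if (meval _)) meval_edge_par meval0 if_same.
Qed.

Lemma compartmental_matrix_colsum n (e : rel 'I_n) k :
  irreflexive e -> \sum_l compartmental_matrix e set0 l k = 0.
Proof.
move=> e_irr; rewrite (bigD1 k) //= !mxE eqxx in_set0 subr0.
rewrite (eq_bigr (fun l => if e k l then edge_par l k else 0)) => [|l lk]; last first.
  by rewrite mxE (negbTE lk).
rewrite -big_mkcondr /= [X in _ + X](eq_bigl (e k)) ?addNr // => l.
by have [->|_] := eqVneq l k; rewrite ?e_irr.
Qed.

Lemma coef_char_poly_map (R S : comNzRingType) (f : {rmorphism R -> S}) n
    (A : 'M[R]_n) d :
  f (char_poly A)`_d = (char_poly (map_mx f A))`_d.
Proof. by rewrite -map_char_poly coef_map. Qed.

Lemma coef_adj_char_poly_mx_map (R S : comNzRingType) (f : {rmorphism R -> S}) n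
    (A : 'M[R]_n) i j d :
  f (\adj (char_poly_mx A) i j)`_d = (\adj (char_poly_mx (map_mx f A)) i j)`_d.
Proof. by rewrite -map_char_poly_mx -map_mx_adj [in RHS]mxE coef_map. Qed.

Lemma io_rhs_polyE n (A : 'M[{mpoly rat[nvar n]}]_n) i j :
  io_rhs_poly A i j = \adj (char_poly_mx A) i j.
Proof. by rewrite /io_rhs_poly mxE /cofactor addnC. Qed.

Section CompartmentalModel.
Variables (n : nat) (e : rel 'I_n) (Leak : {set 'I_n}).
Hypothesis e_irr : irreflexive e.
Hypothesis e_sc : strongly_connected e.

Local Notation A := (compartmental_matrix e Leak).
Local Notation zero_point := (fun=> 0 : rat).

Let reach r x : connect e x r := e_sc x r.
Let par r := tree_parent (reach r).
Let ht r := dist_to_root (reach r).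
Let ht_par r k : k != r -> ht r k = (ht r (par r k)).+1.
Proof. by move=> kr; have [] := tree_parentP (reach r) kr. Qed.
Let ht_root r : ht r r = 0%N.
Proof. exact: dist_to_root_root. Qed.

Let tree_eval r c : map_mx (meval (tree_point r (par r) c)) A =
  tree_mx r (par r) (if r \in Leak then c else 0).
Proof.
by apply: map_compartmental_matrix_tree => k kr; have [] := tree_parentP (reach r) kr.
Qed.

Lemma nonconst_coef_char_poly d :
  nonconst (char_poly A)`_d = (Leak == set0 <= d < n)%N.
Proof.
have [lt_dn|le_nd] := ltnP d n; last first.
  by rewrite monic_coef_nonconst ?char_poly_monic ?size_char_poly // andbF.
have P0 : ((char_poly A)`_d).@[zero_point] = 0.
  by rewrite coef_char_poly_map map_compartmental_matrix0 char_poly0 coefXn ltn_eqF.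
rewrite andbT; have [Leak0|[r r_leak]] := set_0Vmem Leak.
  have -> : Leak == set0 by apply/eqP.
  case: d lt_dn P0 => [n_gt0 _|d lt_dn P0].
    rewrite char_poly_det Leak0 det_eq0_colsum ?mulr0 ?nonconst0 // => k.
    exact: compartmental_matrix_colsum.
  pose r := Ordinal lt_dn.
  apply: (nonconst_meval (u := zero_point) (v := tree_point r (par r) 0)).
  rewrite P0 coef_char_poly_map tree_eval Leak0 in_set0 (char_poly_tree_mx (@ht_par r)).
  by rewrite addr0 coefXM eq_sym coef_XaddC1_exp_neq0 //; lia.
have -> : (Leak == set0) = false by apply/negbTE/set0Pn; exists r.
apply: (nonconst_meval (u := zero_point) (v := tree_point r (par r) 1)).
rewrite P0 coef_char_poly_map tree_eval r_leak (char_poly_tree_mx (@ht_par r)).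
rewrite -exprS prednK; last lia.
by rewrite eq_sym coef_XaddC1_exp_neq0 // ltnW.
Qed.

Lemma nonconst_coef_adj_diag i d :
  nonconst (\adj (char_poly_mx A) i i)`_d = (d < n.-1)%N.
Proof.
have [lt_dn|le_nd] := ltnP d n.-1; last first.
  rewrite adj_char_poly_mx_diag monic_coef_nonconst ?char_poly_monic //.
  by rewrite size_char_poly; lia.
apply: (nonconst_meval (u := zero_point) (v := tree_point i (par i) 0)).
rewrite !coef_adj_char_poly_mx_map map_compartmental_matrix0 adj_char_poly_mx0.
rewrite tree_eval (adj_char_poly_tree_mxE (@ht_par i)) ht_root ?subn0 //.
by rewrite !mxE eqxx mulr1 coefXn ltn_eqF // eq_sym coef_XaddC1_exp_neq0 // ltnW.
Qed.

Lemma nonconst_coef_adj i j L d : i != j -> shortest_path_length e j i L ->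
  nonconst (\adj (char_poly_mx A) i j)`_d = (d < n - L)%N.
Proof.
move=> ij [[p [size_p path_p last_p]] min_L].
have [lt_dnL|le_nLd] := ltnP d (n - L); last first.
  rewrite (coef_adj_char_poly_mx_eq0 (e := e)) ?nonconst0 // => [l m lm em|q qq lq].
    by rewrite mxE (negbTE lm) (negbTE em).
  by have := min_L q qq lq; lia.
have le_ht : (ht i j <= L)%N by rewrite -size_p; apply: dist_to_root_min.
apply: (nonconst_meval (u := zero_point) (v := tree_point i (par i) 0)).
rewrite !coef_adj_char_poly_mx_map map_compartmental_matrix0 adj_char_poly_mx0.
rewrite tree_eval (adj_char_poly_tree_mxE (@ht_par i)) ?ht_root //; last by lia.
by rewrite !mxE (negbTE ij) mulr0 coef0 eq_sym coef_XaddC1_exp_neq0 //; lia.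
Qed.

End CompartmentalModel.

Unset Implicit Arguments.

Theorem corollary3p4 (n : nat) (e : rel 'I_n) (Leak : {set 'I_n}) (i j : 'I_n) :
  irreflexive e ->
  strongly_connected e ->
  let A := compartmental_matrix e Leak in
  [/\ count_nonconst (char_poly A) = (if Leak == set0 then n.-1 else n)%N,
      i = j -> count_nonconst (io_rhs_poly A i j) = n.-1
    & forall L : nat, i <> j -> shortest_path_length e j i L ->
        count_nonconst (io_rhs_poly A i j) = (n - L)%N].
Proof.
move=> e_irr e_sc A; split.
- rewrite (count_nonconst_interval (nonconst_coef_char_poly Leak e_irr e_sc)).
  by case: (Leak == set0); rewrite ?subn1 ?subn0.
- move=> <-; rewrite io_rhs_polyE.
  rewrite (count_nonconst_interval (a := 0) (b := n.-1)) ?subn0 // => d.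
  exact: nonconst_coef_adj_diag.
- move=> L /eqP ij hL; rewrite io_rhs_polyE.
  rewrite (count_nonconst_interval (a := 0) (b := n - L)) ?subn0 // => d.
  exact: nonconst_coef_adj.
Qed.
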